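(* Let $\mathcal{S}=\{S_1,\dots,S_N\}\subset\mathbb{R}^Q_{\ge0}$, let $\Delta$ be a diagonal matrix with positive diagonal entries, and let $\rho\in\mathbb{R}^Q$ with all $\rho_q>0$ satisfy $\rho\notin\mathcal{P}$. Then there exists exactly one vector $\eta$ (a ''fixed point'') such that $$\eta=\Big[\rho-\sum_m\alpha_mS_m\Big]^+,\quad \alpha_m\ge0,\quad \sum_m\alpha_m=1,\quad \alpha_m>0\implies\langle\eta,\Delta S_m\rangle\ge\langle\eta,\Delta S_k\rangle\ \ \forall k.$$
   Context: $[x]^+$ is the componentwise positive part; $\langle x,y\rangle=\sum_qx_qy_q$. Stability region $\mathcal{P}=\{r\in\mathbb{R}^Q_{\ge0}: r\le\sum_n\alpha_nS_n\text{ componentwise for some }\alpha_n\ge0,\sum_n\alpha_n=1\}$. *)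

From HB Require Import structures.
From mathcomp Require Import all_boot all_order all_algebra.
From mathcomp Require Import reals.
Set Implicit Arguments. Unset Strict Implicit. Unset Printing Implicit Defensive.
Import Order.TTheory GRing.Theory Num.Theory.
Local Open Scope ring_scope.

(* Vectors of R^Q are column vectors 'cV[R]_Q; component q is x q 0. *)

Definition pospart (R : realType) (Q : nat) (x : 'cV[R]_Q) : 'cV[R]_Q :=
  \col_q Num.max (x q 0) 0.

Definition ip (R : realType) (Q : nat) (x y : 'cV[R]_Q) : R :=
  \sum_(q < Q) x q 0 * y q 0.

Definition is_prob (R : realType) (N : nat) (alpha : 'I_N -> R) : Prop :=
  (forall n, 0 <= alpha n) /\ \sum_(n < N) alpha n = 1.

Definition stab_region (R : realType) (Q N : nat) (S : 'I_N -> 'cV[R]_Q)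
  (r : 'cV[R]_Q) : Prop :=
  (forall q, 0 <= r q 0) /\
  exists alpha : 'I_N -> R, is_prob alpha /\
    forall q, r q 0 <= (\sum_(n < N) alpha n *: S n) q 0.

Definition fixed_point (R : realType) (Q N : nat) (S : 'I_N -> 'cV[R]_Q)
  (Delta : 'M[R]_Q) (rho eta : 'cV[R]_Q) : Prop :=
  exists alpha : 'I_N -> R,
    is_prob alpha /\
    eta = pospart (rho - \sum_(m < N) alpha m *: S m) /\
    forall m, 0 < alpha m ->
      forall k, ip eta (Delta *m S k) <= ip eta (Delta *m S m).

From HB Require Import structures.
From mathcomp Require Import all_boot all_order all_algebra.
From mathcomp Require Import reals.
From mathcomp Require Import all_classical all_reals all_analysis.
From mathcomp Require Import ring lra.
Set Implicit Arguments. Unset Strict Implicit. Unset Printing Implicit Defensive.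
Import Order.TTheory GRing.Theory Num.Theory.
Local Open Scope classical_set_scope.
Local Open Scope ring_scope.
Import numFieldNormedType.Exports.

(* Fixed points are exactly the first-order optimality points of the convex
   cost  C(alpha) = <eta, Delta eta>  with  eta = [rho - sum_m alpha_m S_m]^+
   over the simplex, whose gradient in the direction  e_k - e_m  is
   -2 <eta, Delta (S_k - S_m)>.  Existence: a minimiser of C on the compact
   simplex is a fixed point, since moving a little mass from an active m to a
   k with a larger score would decrease C.  Uniqueness: two fixed points
   satisfy  <eta1 - eta2, Delta (V1 - V2)> >= 0  for their loads V1, V2,
   while monotonicity of  x |-> [x]^+  bounds that quantity above by
   -<eta1 - eta2, Delta (eta1 - eta2)>. *)

Section ScalarInequalities.
Variable R : realFieldType.

Lemma sqr_max0D_le (a t : R) :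
  Num.max (a + t) 0 ^+ 2 <= Num.max a 0 ^+ 2 + 2 * t * Num.max a 0 + t ^+ 2.
Proof.
case: (lerP 0 a) => ha; case: (lerP 0 (a + t)) => hat;
  rewrite ?(max_l ha) ?(max_l hat) ?(max_r (ltW ha)) ?(max_r (ltW hat)); nra.
Qed.

Lemma max0_cocoercive (a b : R) :
  (Num.max a 0 - Num.max b 0) * (b - a) <= - (Num.max a 0 - Num.max b 0) ^+ 2.
Proof.
case: (lerP 0 a) => ha; case: (lerP 0 b) => hb;
  rewrite ?(max_l ha) ?(max_l hb) ?(max_r (ltW ha)) ?(max_r (ltW hb)); nra.
Qed.

Lemma le0_of_quadratic_ge0 (e0 d K : R) : 0 < e0 ->
  (forall e, 0 < e <= e0 -> 2 * e * d <= e ^+ 2 * K) -> d <= 0.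
Proof.
move=> e0_gt0 hq; rewrite leNgt; apply/negP => d_gt0.
pose K' := Num.max K 0; have K'_ge0 : 0 <= K' by rewrite le_max lexx orbT.
pose e := Num.min e0 (d / (K' + 1)).
have e_gt0 : 0 < e by rewrite lt_min e0_gt0 divr_gt0 // ltr_wpDl.
have eK'_le : e * K' <= d * K' / (K' + 1).
  by rewrite mulrAC ler_wpM2r // ge_min lexx orbT.
have : 2 * e * d <= e ^+ 2 * K'.
  apply: (le_trans (hq e _)); first by rewrite e_gt0 ge_min lexx.
  by rewrite ler_wpM2l ?sqr_ge0 // le_max lexx.
move=> h; have {h} : 2 * d <= e * K'.
  rewrite -(ler_pM2l e_gt0); congr (_ <= _): h; ring.
have : d * K' / (K' + 1) < d.
  by rewrite ltr_pdivrMr ?ltr_wpDl // mulrDr mulr1 ltrDl.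
lra.
Qed.

End ScalarInequalities.

Section Probabilities.
Variables (R : realType) (N : nat).
Implicit Types (a b : 'I_N -> R) (g : 'I_N -> R).

Lemma is_prob_exists_gt0 a : is_prob a -> exists m, 0 < a m.
Proof.
move=> [a_ge0 a_sum1]; apply/not_existsP => hn.
have : \sum_(m < N) a m <= 0.
  by apply: sumr_le0 => m _; rewrite leNgt; apply/negP/hn.
by rewrite a_sum1 ler10.
Qed.

Lemma mix_le_argmax_mix a b g : is_prob a -> is_prob b ->
  (forall m, 0 < a m -> forall k, g k <= g m) ->
  \sum_(m < N) b m * g m <= \sum_(m < N) a m * g m.
Proof.
move=> pa [b_ge0 b_sum1] a_argmax; have [m0 am0] := is_prob_exists_gt0 pa.
have [a_ge0 a_sum1] := pa.
apply: (@le_trans _ _ (g m0)).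
  rewrite -[leRHS]mul1r -b_sum1 mulr_suml; apply: ler_sum => m _.
  exact/ler_wpM2l/a_argmax.
rewrite -[leLHS]mul1r -a_sum1 mulr_suml; apply: ler_sum => m _.
have [am_gt0|am_le0] := ltrP 0 (a m); first exact/ler_wpM2l/a_argmax/am_gt0.
have -> : a m = 0 by apply/eqP; rewrite eq_le am_le0 a_ge0.
by rewrite !mul0r.
Qed.

Definition move_mass a m k (e : R) : 'I_N -> R :=
  fun i => a i + (i == k)%:R * e - (i == m)%:R * e.

Lemma sum_pred1_mul (V : lmodType R) k (e : R) (v : 'I_N -> V) :
  \sum_(i < N) ((i == k)%:R * e) *: v i = e *: v k.
Proof.
rewrite (bigD1 k) //= eqxx mul1r big1 ?addr0 // => i /negbTE ->.
by rewrite mul0r scale0r.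
Qed.

Lemma mix_move_mass (V : lmodType R) a m k e (v : 'I_N -> V) :
  \sum_(i < N) move_mass a m k e i *: v i
  = \sum_(i < N) a i *: v i + e *: (v k - v m).
Proof.
under eq_bigr do rewrite !scalerBl scalerDl.
by rewrite sumrB big_split /= !sum_pred1_mul scalerBr addrA.
Qed.

Lemma is_prob_move_mass a m k e :
  is_prob a -> 0 <= e -> e <= a m -> is_prob (move_mass a m k e).
Proof.
move=> [a_ge0 a_sum1] e_ge0 e_le; split.
  move=> i; rewrite /move_mass; case: (eqVneq i m) => [->|_].
    rewrite mul1r; have := mulr_ge0 (ler0n R (m == k)) e_ge0; lra.
  by rewrite mul0r subr0 addr_ge0 ?mulr_ge0.
have sum_pred1 j : \sum_(i < N) (i == j)%:R * e = e.
  by rewrite (bigD1 j) //= eqxx mul1r big1 ?addr0 // => i /negbTE ->; rewrite mul0r.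
by rewrite sumrB big_split /= a_sum1 !sum_pred1 addrK.
Qed.

Lemma prob_argmin (f : 'rV[R]_N -> R) : (0 < N)%N -> continuous f ->
  exists2 c : 'rV[R]_N, is_prob (fun i => c ord0 i) &
    forall t : 'rV[R]_N, is_prob (fun i => t ord0 i) -> f c <= f t.
Proof.
move=> N_gt0 f_cont; pose simplex := [set v : 'rV[R]_N | is_prob (fun i => v ord0 i)].
have simplex_neq0 : simplex !=set0.
  exists (\row_i (i == Ordinal N_gt0)%:R); split => [i|]; rewrite ?mxE //.
  under eq_bigr do rewrite mxE.
  by rewrite (bigD1 (Ordinal N_gt0)) //= ?eqxx big1 ?addr0 // => i /negbTE ->.
have simplex_closed : closed simplex.
  have -> : simplex = \bigcap_(i in setT) ((fun v : 'rV[R]_N => v ord0 i) @^-1` [set x | 0 <= x])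
      `&` ((fun v : 'rV[R]_N => \sum_(i < N) v ord0 i) @^-1` [set 1]).
    apply/seteqP; split => v [h1 h2]; split => // i; last exact: h1.
    by move=> _; exact: h1.
  apply: closedI.
    apply: closed_bigI => i _; apply: closed_comp; last exact: closed_ge.
    by move=> v _; exact: coord_continuous.
  apply: closed_comp; last exact: closed_eq.
  move=> v _; apply: continuous_big => [|i _]; first exact: add_continuous.
  exact: coord_continuous.
have simplex_compact : compact simplex.
  apply: (subclosed_compact simplex_closed
    (@rV_compact _ N (fun _ => `[(0 : R), 1]%classic) (fun _ => @segment_compact R 0 1)))
    => v [v_ge0 v_sum1] i /=.
  rewrite in_itv /= v_ge0 -v_sum1 (bigD1 i) //= lerDl.
  by apply: sumr_ge0 => j _.
have [c c_in c_min] :=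
  EVT_min_rV simplex_neq0 simplex_compact (continuous_subspaceT f_cont).
by exists c => [|t t_in]; [move: c_in; rewrite inE | apply: c_min; rewrite inE].
Qed.

End Probabilities.

Section InnerProduct.
Variables (R : realType) (Q : nat).
Implicit Types x y z : 'cV[R]_Q.

Lemma ipBl x y z : ip (x - y) z = ip x z - ip y z.
Proof. by rewrite /ip -sumrB; apply: eq_bigr => q _; rewrite !mxE mulrBl. Qed.

Lemma ipBr x y z : ip x (y - z) = ip x y - ip x z.
Proof. by rewrite /ip -sumrB; apply: eq_bigr => q _; rewrite !mxE mulrBr. Qed.

Lemma ip_sumr N x (a : 'I_N -> R) (v : 'I_N -> 'cV[R]_Q) :
  ip x (\sum_(m < N) a m *: v m) = \sum_(m < N) a m * ip x (v m).
Proof.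
rewrite /ip; under eq_bigr do rewrite summxE mulr_sumr.
rewrite exchange_big; apply: eq_bigr => m _; rewrite mulr_sumr.
by apply: eq_bigr => q _; rewrite mxE mulrCA.
Qed.

Variable Delta : 'M[R]_Q.
Hypothesis Delta_diag : is_diag_mx Delta.
Hypothesis Delta_gt0 : forall q, 0 < Delta q q.

Lemma ip_diag_mx x y : ip x (Delta *m y) = \sum_(q < Q) Delta q q * (x q 0 * y q 0).
Proof.
apply: eq_bigr => q _; rewrite mxE (bigD1 q) //= big1 ?addr0; first by rewrite mulrCA.
by move=> j jq; rewrite (is_diag_mxP Delta_diag) 1?eq_sym ?mul0r.
Qed.

Definition energy x := ip (pospart x) (Delta *m pospart x).

Lemma energy_subZ_le x u (t : R) :
  energy (x - t *: u)
  <= energy x - 2 * t * ip (pospart x) (Delta *m u) + t ^+ 2 * ip u (Delta *m u).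
Proof.
rewrite /energy !ip_diag_mx !mulr_sumr -sumrB -big_split /=.
apply: ler_sum => q _; rewrite !mxE.
have := ler_wpM2l (ltW (Delta_gt0 q)) (sqr_max0D_le (x q 0) (- (t * u q 0))).
by congr (_ <= _); ring.
Qed.

Lemma pospart_eq_of_ip_ge0 x y :
  0 <= ip (pospart x - pospart y) (Delta *m (y - x)) -> pospart x = pospart y.
Proof.
rewrite ip_diag_mx => h.
have sq_ge0 q : 0 <= Delta q q * (pospart x - pospart y) q 0 ^+ 2.
  by rewrite mulr_ge0 ?sqr_ge0 ?ltW.
have /eqP : \sum_(q < Q) Delta q q * (pospart x - pospart y) q 0 ^+ 2 = 0.
  apply/eqP; rewrite eq_le sumr_ge0 // andbT -oppr_ge0 -sumrN.
  apply: (le_trans h); apply: ler_sum => q _.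
  rewrite -mulrN; apply: ler_wpM2l; first exact: ltW.
  rewrite !mxE; exact: max0_cocoercive.
rewrite psumr_eq0 // => /allP sq0; apply/matrixP => q j; rewrite (ord1 j).
move: (sq0 q (mem_index_enum _)).
by rewrite /= mulf_eq0 (gt_eqF (Delta_gt0 q)) sqrf_eq0 !(mxE, subr_eq0) => /eqP.
Qed.

End InnerProduct.

Section FixedPoint.
Variables (R : realType) (Q N : nat) (S : 'I_N -> 'cV[R]_Q).
Variables (Delta : 'M[R]_Q) (rho : 'cV[R]_Q).
Hypothesis Delta_diag : is_diag_mx Delta.
Hypothesis Delta_gt0 : forall q, 0 < Delta q q.

Definition load (a : 'I_N -> R) := \sum_(m < N) a m *: S m.

Lemma ip_load x a : ip x (Delta *m load a) = \sum_(m < N) a m * ip x (Delta *m S m).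
Proof.
rewrite /load mulmx_sumr -ip_sumr; congr ip; apply: eq_bigr => m _; by rewrite scalemxAr.
Qed.

Lemma fixed_point_of_argmin a : is_prob a ->
  (forall b, is_prob b -> energy Delta (rho - load a) <= energy Delta (rho - load b)) ->
  fixed_point S Delta rho (pospart (rho - load a)).
Proof.
move=> pa a_min; exists a; split=> //; split=> // m am_gt0 k.
set eta := pospart (rho - load a); rewrite -subr_le0.
pose u := S k - S m.
apply: (@le0_of_quadratic_ge0 _ (a m) _ (ip u (Delta *m u)) am_gt0).
move=> e /andP[e_gt0 e_le].
have := a_min _ (is_prob_move_mass k pa (ltW e_gt0) e_le).
rewrite /load mix_move_mass -/(load a) opprD addrA => /le_trans.
move=> /(_ _ (energy_subZ_le Delta_diag Delta_gt0 _ _ _)).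
rewrite -/eta -/u mulmxBr ipBr; lra.
Qed.

Lemma fixed_point_unique eta1 eta2 :
  fixed_point S Delta rho eta1 -> fixed_point S Delta rho eta2 -> eta1 = eta2.
Proof.
move=> [a1 [pa1 [-> a1_argmax]]] [a2 [pa2 [-> a2_argmax]]].
apply: (pospart_eq_of_ip_ge0 Delta_diag Delta_gt0).
have := mix_le_argmax_mix pa1 pa2 a1_argmax.
have := mix_le_argmax_mix pa2 pa1 a2_argmax.
rewrite -!ip_load -/(load a1) -/(load a2) ipBl !mulmxBr !ipBr; lra.
Qed.

Lemma continuous_energy_load :
  continuous (fun v : 'rV[R]_N => energy Delta (rho - load (fun m => v ord0 m))).
Proof.
pose resid q (v : 'rV[R]_N) := rho q 0 - \sum_(m < N) v ord0 m * S m q 0.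
have -> : (fun v : 'rV[R]_N => energy Delta (rho - load (fun m => v ord0 m)))
    = (fun v : 'rV[R]_N => \sum_(q < Q) Delta q q * (Num.max (resid q v) 0 * Num.max (resid q v) 0)).
  apply/funext => v; rewrite /energy ip_diag_mx //; apply: eq_bigr => q _.
  by rewrite !mxE summxE; under eq_bigr do rewrite mxE.
have resid_cont q : continuous (resid q).
  move=> v; apply: continuousB; first exact: cst_continuous.
  apply: continuous_big => [|m _ w]; first exact: add_continuous.
  apply: continuousM; [exact: coord_continuous | exact: cst_continuous].
apply: continuous_big => [|q _ v]; first exact: add_continuous.
have pos_cont : continuous (fun v => Num.max (resid q v) 0).
  by move=> w; apply: continuous_max; [exact: resid_cont | exact: cst_continuous].
have := @continuousM R _ (fun=> Delta q q) _ v.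
apply; first exact: cst_continuous.
exact: continuousM (pos_cont v) (pos_cont v).
Qed.

End FixedPoint.

Theorem lemma10 (R : realType) (Q N : nat) (S : 'I_N -> 'cV[R]_Q)
  (Delta : 'M[R]_Q) (rho : 'cV[R]_Q) :
  (0 < N)%N ->
  (forall n q, 0 <= S n q 0) ->
  is_diag_mx Delta ->
  (forall q, 0 < Delta q q) ->
  (forall q, 0 < rho q 0) ->
  ~ stab_region S rho ->
  exists! eta : 'cV[R]_Q, fixed_point S Delta rho eta.
Proof.
move=> N_gt0 _ Delta_diag Delta_gt0 _ _.
have [c pc c_min] :=
  prob_argmin N_gt0 (continuous_energy_load (S := S) (rho := rho) Delta_diag).
have c_fp : fixed_point S Delta rho (pospart (rho - load S (fun m => c ord0 m))).
  apply: fixed_point_of_argmin => // b pb.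
  have row_bE : (fun m => (\row_i b i) ord0 m) = b by apply/funext => m; rewrite mxE.
  by have := c_min (\row_i b i); rewrite row_bE; apply.
exists (pospart (rho - load S (fun m => c ord0 m))); split => // eta eta_fp.
exact: fixed_point_unique c_fp eta_fp.
Qed.
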